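(* Let $c\in[0,1]$. For every countable collection of languages $\mathcal{L}$ there is a set-based generator that generates in the limit from $\mathcal{L}$ and achieves set-based upper density at least $1-c$ under adversaries that use an enumeration with finite noise and $c$-omissions. In particular, if the adversary uses an enumeration with finite noise and finite omissions, there is a set-based generator that generates in the limit from $\mathcal{L}$ and achieves set-based upper density $1$.
   Context: The universe is $U=\mathbb{N}$ with its natural order. A language is an infinite subset of $U$; a collection is a countable family of languages. For $A,B\subseteq\mathbb{N}$ with $B=\{b_1<b_2<\cdots\}$, $\mu_{\rm up}(A,B)=\limsup_n\frac1n|A\cap\{b_1,\dots,b_n\}|$ and $\mu_{\rm low}(A,B)=\liminf_n\frac1n|A\cap\{b_1,\dots,b_n\}|$. An enumeration is a sequence of distinct elements of $U$; $S_n=\{x_1,\dots,x_n\}$. An enumeration of $L$ with finite noise is a sequence in which every element of $L$ appears exactly once and $|\{x_1,x_2,\dots\}\setminus L|<\infty$. An enumeration of $K$ with finite noise and $c$-omissions is an enumeration with finite noise of some $\hat K\subseteq K$ with $\mu_{\rm low}(\hat K,K)\ge 1-c$; with finite noise and finite omissions it is one of some $\hat K\subseteq K$ with $|K\setminus\hat K|<\infty$. A set-based generator is a sequence of maps that, given $x_1,\dots,x_n$ (and knowledge of $\mathcal{L}$, not of $K$), outputs a set $A_n\subseteq U\setminus S_n$. It generates in the limit if for every $K\in\mathcal{L}$ and every admissible enumeration of $K$ there is $n^\star$ with $A_n\subseteq K$ for all $n\ge n^\star$. It achieves set-based upper density $\rho$ if $\limsup_n\mu_{\rm low}(A_n,K)\ge\rho$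 (for every such $K$ and enumeration). *)

From HB Require Import structures.
From mathcomp Require Import all_boot all_order all_algebra.
From mathcomp Require Import all_classical all_reals.
From mathcomp Require Import topology normedtype sequences.
Set Implicit Arguments. Unset Strict Implicit. Unset Printing Implicit Defensive.
Import Order.TTheory GRing.Theory Num.Theory.
Local Open Scope classical_set_scope.
Local Open Scope ring_scope.

(* Universe U = nat.  Sets of naturals are [set nat] (Prop-valued). *)

Definition rank_below (B : set nat) (y : nat) : nat :=
  count (fun z => `[< B z >]) (iota 0 y).

(* b_(k+1): the element of B having exactly k smaller elements in B
   (well defined when B is infinite; 0-indexed: b_elem B 0 = b_1) *)
Definition b_elem (B : set nat) (k : nat) : nat :=
  xget 0%N [set y | B y /\ rank_below B y = k].

Definition count_first (A B : set nat) (n : nat) : nat :=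
  count (fun y => `[< A y >]) (map (b_elem B) (iota 0 n)).

Definition mu_low (R : realType) (A B : set nat) : \bar R :=
  limn_einf (fun n : nat =>
    (((count_first A B n.+1)%:R / (n.+1)%:R : R))%:E).

(* an enumeration is an (infinite) sequence x : nat -> nat; its prefix
   x_1..x_n is (prefix x n), and S_n = its elements *)
Definition prefix (x : nat -> nat) (n : nat) : seq nat := map x (iota 0 n).

Definition set_generator := seq nat -> set nat.
Definition valid_generator (G : set_generator) : Prop :=
  forall (s : seq nat) (y : nat), G s y -> y \notin s.

Definition enum_finite_noise (Khat : set nat) (x : nat -> nat) : Prop :=
  injective x /\ Khat `<=` range x /\ finite_set (range x `\` Khat).

Definition enum_noise_c_omissions (R : realType) (c : R) (K : set nat)
    (x : nat -> nat) : Prop :=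
  exists Khat : set nat, Khat `<=` K /\ ((1 - c)%:E <= mu_low R Khat K)%E /\
    enum_finite_noise Khat x.

Definition enum_noise_finite_omissions (K : set nat) (x : nat -> nat) : Prop :=
  exists Khat : set nat, Khat `<=` K /\ finite_set (K `\` Khat) /\
    enum_finite_noise Khat x.

Definition generates_in_limit (C : set (set nat))
    (adm : set nat -> (nat -> nat) -> Prop) (G : set_generator) : Prop :=
  forall K x, C K -> adm K x ->
    exists nstar : nat, forall n : nat, (nstar <= n)%N -> G (prefix x n) `<=` K.

Definition achieves_upper_density (R : realType) (C : set (set nat))
    (adm : set nat -> (nat -> nat) -> Prop) (G : set_generator) (rho : R) : Prop :=
  forall K x, C K -> adm K x ->
    (rho%:E <= limn_esup (fun n : nat => mu_low R (G (prefix x n)) K))%E.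

Definition collection (C : set (set nat)) : Prop :=
  countable C /\ (forall K, C K -> infinite_set K).

From Pilot Require Import Defs.
From HB Require Import structures.
From mathcomp Require Import all_boot all_order all_algebra.
From mathcomp Require Import all_classical all_reals.
From mathcomp Require Import topology normedtype sequences ereal.
From mathcomp Require Import zify.
Import Order.TTheory GRing.Theory Num.Theory.
Local Open Scope classical_set_scope.
Local Open Scope ring_scope.

(* A hypothesis [h] encodes a pair [(i, e)]: "the target is [L i] and at most [e]
   enumerated elements lie outside it".  At step [n] the generator intersects the
   languages of the hypotheses that are still consistent and lie below the horizon,
   the first hypothesis refuted by the newest element [x_n].  A hypothesis is refuted
   at most once, so the horizon tends to infinity and eventually exceeds the true
   hypothesis, which is never refuted: this is generation in the limit.  At the
   infinitely many times [n] where the horizon attains a running minimum, no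
   hypothesis below it is ever refuted later, so each of them misses only finitely
   many enumerated elements; hence [A_n] contains all but finitely many elements of
   [Khat], and mu_low(A_n, K) >= mu_low(Khat, K). *)

Lemma count_iota_monotone (P : pred nat) m n : (m <= n)%N ->
  (count P (iota 0 m) <= count P (iota 0 n))%N.
Proof. by move=> mn; rewrite -(subnKC mn) iotaD count_cat leq_addr. Qed.

Lemma count_iotaS (P : pred nat) n :
  count P (iota 0 n.+1) = (count P (iota 0 n) + P n)%N.
Proof. by rewrite -addn1 iotaD count_cat /= addn0. Qed.

Lemma bounded_count_finite (P : pred nat) e :
  (forall m, count P (iota 0 m) <= e)%N -> finite_set [set k | P k].
Proof.
move=> bounded.
(* Past a time [m0] at which the count is maximal, [P] never holds again. *)
have attained : exists v, `[< exists m, count P (iota 0 m) = v >].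
  by exists 0%N; apply/asboolP; exists 0%N.
have below_e v : `[< exists m, count P (iota 0 m) = v >] -> (v <= e)%N.
  by move=> /asboolP [m <-].
have [v /asboolP [m0 m0v] vmax] := ex_maxnP attained below_e.
apply: (sub_finite_set _ (finite_II m0)) => k /= Pk; rewrite ltnNge; apply/negP => m0k.
have := vmax _ (asboolT (ex_intro _ k.+1 erefl)).
rewrite count_iotaS Pk -m0v addn1 ltnNge => /negP; apply.
exact: count_iota_monotone.
Qed.

Lemma uniq_count_mem_le (T : eqType) (l s : seq T) :
  uniq l -> (count (mem s) l <= size s)%N.
Proof.
move=> ul; rewrite -size_filter; apply: uniq_leq_size; first exact: filter_uniq.
by move=> z; rewrite mem_filter => /andP[].
Qed.

Lemma countable_sub_range {T : pointedType} {C : set T} :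
  countable C -> exists L : nat -> T, C `<=` range L.
Proof. by move=> /pcard_surjP [L surjL]; exists L => t /surjL [i _ <-]; exists i. Qed.

Lemma nat_seq_record_low (u : nat -> nat) N0 :
  exists2 n, (N0 <= n)%N & forall m, (n <= m)%N -> (u n <= u m)%N.
Proof.
have attained : exists v, `[< exists2 n, (N0 <= n)%N & u n = v >].
  by exists (u N0); apply/asboolP; exists N0.
have [v /asboolP [n N0n unv] vmin] := ex_minnP attained.
exists n => // m nm; rewrite unv; apply: vmin; apply/asboolP.
by exists m => //; apply: leq_trans nm.
Qed.

Lemma rank_belowS (B : set nat) y :
  rank_below B y.+1 = (rank_below B y + `[< B y >])%N.
Proof. exact: count_iotaS. Qed.

Lemma rank_below_unbounded {B : set nat} : infinite_set B ->
  forall k, exists y, (k < rank_below B y)%N.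
Proof.
move=> infB k; apply: contrapT => /forallNP bounded; apply: infB.
have -> : B = [set y | `[< B y >]] by apply/seteqP; split=> y /asboolP.
by apply: (@bounded_count_finite _ k) => m; rewrite leqNgt; apply/negP/bounded.
Qed.

Lemma b_elem_spec (B : set nat) k : infinite_set B ->
  B (b_elem B k) /\ rank_below B (b_elem B k) = k.
Proof.
move=> infB; apply: (@xgetPex _ 0%N [set y | B y /\ rank_below B y = k]).
have [y ky] := rank_below_unbounded infB k.
have passes : exists y, (k < rank_below B y.+1)%N.
  by exists y; apply: leq_trans ky _; rewrite rank_belowS leq_addr.
have [z kz zmin] := ex_minnP passes.
have rank_z : (rank_below B z <= k)%N.
  case: z kz zmin => [|z] _ zmin; first by [].
  by rewrite leqNgt; apply/negP => /zmin; rewrite ltnn.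
have Bz : B z.
  apply: contrapT => /asboolPn /negbTE nBz.
  by move: kz; rewrite rank_belowS nBz addn0 ltnNge rank_z.
exists z; split=> //; apply/eqP; rewrite eqn_leq rank_z /=.
by move: kz; rewrite rank_belowS (asboolT Bz) addn1 ltnS.
Qed.

Lemma b_elem_uniq (B : set nat) n : infinite_set B -> uniq (map (b_elem B) (iota 0 n)).
Proof.
move=> infB; rewrite map_inj_uniq ?iota_uniq // => a b ab.
by rewrite -(b_elem_spec B a infB).2 ab (b_elem_spec B b infB).2.
Qed.

Lemma lee_limn_einf_near (R : realType) (u v : (\bar R)^nat) :
  (\forall n \near \oo, (u n <= v n)%E) -> (limn_einf u <= limn_einf v)%E.
Proof.
move=> [N _ uv]; rewrite !limn_einf_lim; apply: lee_lim; try exact: is_cvg_einfs.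
exists N => // m /= Nm; apply: le_ereal_inf_tmp => _ [k /= mk <-].
apply: (@le_trans _ _ (u k)); first by apply: ereal_inf_lbound; exists k.
by apply: uv; apply: leq_trans mk.
Qed.

Lemma limn_esup_ge_cofinal (R : realType) (v : (\bar R)^nat) (r : \bar R) :
  (forall N, exists2 n, (N <= n)%N & (r <= v n)%E) -> (r <= limn_esup v)%E.
Proof.
move=> cofinal; rewrite limn_esup_lim; apply: lime_ge; first exact: is_cvg_esups.
apply: nearW => m; have [n mn rn] := cofinal m.
by apply: le_trans rn _; apply: ereal_sup_ubound; exists n.
Qed.

Lemma count_first_le_diff (A B K : set nat) (s : seq nat) n : infinite_set K ->
  B `\` A `<=` [set` s] -> (count_first B K n <= count_first A K n + size s)%N.
Proof.
move=> infK BA; rewrite /count_first; set l := map (b_elem K) (iota 0 n).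
apply: (@leq_trans (count (fun y => `[< A y >]) l + count (mem s) l)).
  rewrite -count_predUI (leq_trans _ (leq_addr _ _)) //.
  apply: sub_count => y /= /asboolP By; case: (asboolP (A y)) => //= nAy.
  exact: BA.
by rewrite leq_add2l; apply/uniq_count_mem_le/b_elem_uniq.
Qed.

Lemma mu_low_le_finite_diff (R : realType) (A B K : set nat) : infinite_set K ->
  finite_set (B `\` A) -> (mu_low R B K <= mu_low R A K)%E.
Proof.
move=> infK /finite_seqP [s BA]; apply/lee_addgt0Pr => e e0.
rewrite addeC -limn_einf_shift //; apply: lee_limn_einf_near.
near=> n; rewrite -EFinD lee_fin.
have few_missed : (size s)%:R <= e * n.+1%:R.
  rewrite mulrC -ler_pdivrMr // (@le_trans _ _ n%:R) ?ler_nat //.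
  by apply: ltW; near: n; exact: nbhs_infty_gtr.
have le_count : (count_first B K n.+1 <= count_first A K n.+1 + size s)%N.
  by apply: count_first_le_diff; rewrite ?BA.
rewrite ler_pdivrMr // mulrDl divfK // addrC.
apply: le_trans (lerD (lexx _) few_missed).
by rewrite -natrD ler_nat.
Unshelve. all: by end_near.
Qed.

Lemma mu_low_id (R : realType) (K : set nat) : infinite_set K -> mu_low R K K = 1%E.
Proof.
move=> infK; have full n : count_first K K n = n.
  rewrite /count_first (eq_in_count (a2 := predT)) ?count_predT ?size_map ?size_iota //.
  by move=> y /mapP [k _ ->]; apply/asboolP; exact: (b_elem_spec K k infK).1.
rewrite /mu_low (_ : (fun n => _) = fun _ => 1%E).
  by have [-> _] := cvg_limn_einf_sup (cvg_cst (1%E : \bar R)).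
by apply: funext => n; rewrite full divff.
Qed.

(* [seq.prefix] shadows [Defs.prefix]. *)
Local Notation prefix := Defs.prefix.

Lemma size_prefix x n : size (prefix x n) = n.
Proof. by rewrite size_map size_iota. Qed.

Lemma prefixD x {m n} : (m <= n)%N -> prefix x n = prefix x m ++ map x (iota m (n - m)).
Proof. by move=> mn; rewrite /prefix -{1}(subnKC mn) iotaD map_cat. Qed.

Lemma prefixS x n : prefix x n.+1 = rcons (prefix x n) (x n).
Proof. by rewrite (prefixD x (leqnSn n)) subSnn cats1. Qed.

Lemma take_prefix x n : take (size (prefix x n)).-1 (prefix x n) = prefix x n.-1.
Proof.
rewrite size_prefix; case: n => [|n] //=.
by rewrite prefixS -cats1 take_size_cat ?size_prefix.
Qed.

Definition decode (h : nat) : nat * nat := odflt (0, 0)%N (unpickle h).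

Definition consistent (L : nat -> set nat) (s : seq nat) (h : nat) : bool :=
  (count (fun y => ~~ `[< L (decode h).1 y >]) s <= (decode h).2)%N.

Definition refuted_last L (s : seq nat) h :=
  consistent L (take (size s).-1 s) h && ~~ consistent L s h.

Definition horizon L (s : seq nat) : nat := find (refuted_last L s) (iota 0 (size s).+1).

Definition generator (L : nat -> set nat) : set_generator := fun s =>
  [set y | (forall h, (h < horizon L s)%N -> consistent L s h -> L (decode h).1 y) /\
           y \notin s].

Lemma generator_valid L : valid_generator (generator L).
Proof. by move=> s y []. Qed.

Section GeneratorRun.
Context {L : nat -> set nat} {x : nat -> nat}.

Local Notation consistent_at n h := (consistent L (prefix x n) h).
Local Notation horizon_at n := (horizon L (prefix x n)).

Definition refuted_at n h := consistent_at n.-1 h && ~~ consistent_at n h.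

Lemma consistent_prefix_le {h m n} : (m <= n)%N -> consistent_at n h -> consistent_at m h.
Proof. by move=> mn; apply: leq_trans; rewrite (prefixD x mn) count_cat leq_addr. Qed.

Lemma refuted_lastE n h : refuted_last L (prefix x n) h = refuted_at n h.
Proof. by rewrite /refuted_last take_prefix. Qed.

Lemma horizon_le n : (horizon_at n <= n.+1)%N.
Proof. by rewrite /horizon size_prefix -[leqRHS](size_iota 0) find_size. Qed.

Lemma refuted_at_horizon n : (horizon_at n <= n)%N -> refuted_at n (horizon_at n).
Proof.
rewrite /horizon size_prefix -ltnS => hn.
have hs : has (refuted_last L (prefix x n)) (iota 0 n.+1) by rewrite has_find size_iota.
by have := nth_find 0%N hs; rewrite nth_iota // refuted_lastE.
Qed.

Lemma horizon_le_refuted {n h} : (h <= n)%N -> refuted_at n h -> (horizon_at n <= h)%N.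
Proof.
move=> hn refuted; rewrite leqNgt; apply/negP => /(before_find 0%N).
by rewrite nth_iota ?size_prefix // refuted_lastE refuted.
Qed.

Lemma refuted_between {h n n'} :
  consistent_at n h -> (n <= n')%N -> ~~ consistent_at n' h ->
  exists2 m, (n < m <= n')%N & refuted_at m h.
Proof.
move=> cons_n; elim: n' => [|n' IH]; first by rewrite leqn0 => /eqP <-; rewrite cons_n.
rewrite leq_eqVlt => /orP[/eqP <-|]; first by rewrite cons_n.
rewrite ltnS => nn' not_cons; case: (boolP (consistent_at n' h)) => [cons'|/(IH nn')].
  by exists n'.+1; rewrite ?ltnS ?nn' //= /refuted_at cons'.
by case=> m /andP[nm mn'] ref; exists m; rewrite ?nm ?(leq_trans mn') /=.
Qed.

Lemma refuted_at_eventually_false h : \forall n \near \oo, ~~ refuted_at n h.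
Proof.
have [[n0 not_cons]|always] := pselect (exists n0, ~~ consistent_at n0 h).
  exists n0.+1 => // n /= n0n; rewrite negb_and negbK; apply/orP; left.
  apply: contra not_cons; apply: consistent_prefix_le.
  by rewrite -ltnS prednK // (leq_trans _ n0n).
apply: nearW => n; rewrite negb_and negbK; apply/orP; right.
by apply: contrapT => /negP not_cons; apply: always; exists n.
Qed.

Lemma horizon_cvg B : \forall n \near \oo, (B <= horizon_at n)%N.
Proof.
have never_refuted : \forall n \near \oo, forall i : 'I_B, ~~ refuted_at n i.
  by apply: filter_forall => i; exact: refuted_at_eventually_false.
near=> n.
have [never Bn] : (forall i : 'I_B, ~~ refuted_at n i) /\ (B <= n)%N.
  by split; near: n; [exact: never_refuted | exact: nbhs_infty_ge].
rewrite leqNgt; apply/negP => small; apply/negP: (never (Ordinal small)).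
by rewrite /= refuted_at_horizon // (leq_trans (ltnW small)).
Unshelve. all: by end_near.
Qed.

Lemma consistent_below_record {n h} :
  (forall m, (n <= m)%N -> (horizon_at n <= horizon_at m)%N) ->
  (h < horizon_at n)%N -> consistent_at n h -> forall m, consistent_at m h.
Proof.
move=> record hn cons_n m.
have [mn|nm] := leqP m n; first exact: consistent_prefix_le mn cons_n.
apply: contrapT => /negP not_cons.
have [m' /andP[nm' _] refuted] := refuted_between cons_n (ltnW nm) not_cons.
have hm' : (h <= m')%N by have := horizon_le n; lia.
have := horizon_le_refuted hm' refuted; have := record m' (ltnW nm').
by lia.
Qed.

Lemma consistent_forever_finite h : (forall m, consistent_at m h) ->
  finite_set [set k | ~ L (decode h).1 (x k)].
Proof.
move=> always; have -> : [set k | ~ L (decode h).1 (x k)] =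
    [set k | ~~ `[< L (decode h).1 (x k) >]].
  by apply/seteqP; split=> k /=; case: asboolP.
apply: (@bounded_count_finite _ (decode h).2) => m.
by have := always m; rewrite /consistent count_map.
Qed.

Lemma generator_eventually_sub {h} : (forall m, consistent_at m h) ->
  \forall n \near \oo, generator L (prefix x n) `<=` L (decode h).1.
Proof.
move=> always; apply: filterS (horizon_cvg h.+1) => n hn y [in_all _].
exact: in_all h hn (always n).
Qed.

Lemma generator_cofinite_at_record {n} :
  (forall m, (n <= m)%N -> (horizon_at n <= horizon_at m)%N) ->
  finite_set (range x `\` generator L (prefix x n)).
Proof.
move=> record.
pose stable h := (h < horizon_at n)%N && consistent_at n h.
pose missed := `I_n `|` \bigcup_(h in [set h | stable h]) [set k | ~ L (decode h).1 (x k)].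
apply: (sub_finite_set (B := x @` missed)).
  move=> _ [[k _ <-] not_gen]; case: (boolP (x k \in prefix x n)) => [/mapP [j]|fresh].
    by rewrite mem_iota => /= jn ->; exists j => //; left.
  have [h /not_implyP [hn /not_implyP [cons_h not_L]]] : exists h, ~ (
      (h < horizon_at n)%N -> consistent_at n h -> L (decode h).1 (x k)).
    by apply/existsNP => in_all; apply: not_gen.
  by exists k => //; right; exists h => //; apply/andP.
apply/finite_image; rewrite finite_setU; split=> //.
apply: bigcup_finite => [|h /andP [hn cons_h]].
  by apply: sub_finite_set (finite_II (horizon_at n)) => h /andP [].
exact/consistent_forever_finite/(consistent_below_record record hn cons_h).
Qed.

End GeneratorRun.

Lemma true_hypothesis L i x : injective x -> finite_set (range x `\` L i) ->
  exists2 h, (decode h).1 = i & forall m, consistent L (prefix x m) h.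
Proof.
move=> injx /finite_seqP [s noise].
have decodeE : decode (pickle (i, size s)) = (i, size s) by rewrite /decode pickleK.
exists (pickle (i, size s)) => [|m]; first by rewrite decodeE.
rewrite /consistent decodeE /=.
apply: leq_trans (@uniq_count_mem_le _ (prefix x m) s _); last first.
  by rewrite map_inj_uniq ?iota_uniq.
rewrite !count_map; apply: sub_count => k /= /asboolPn not_L.
have : (range x `\` L i) (x k) by split=> //; exists k.
by rewrite noise.
Qed.

Lemma generator_eventually_sub_language L i (Khat : set nat) x :
  Khat `<=` L i -> enum_finite_noise Khat x ->
  exists nstar, forall n, (nstar <= n)%N -> generator L (prefix x n) `<=` L i.
Proof.
move=> KhL [injx [_ noise]].
have [|h <- always] := @true_hypothesis L i x injx.
  by apply: sub_finite_set noise => y [xy not_L]; split=> // /KhL.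
by have [nstar _ sub] := generator_eventually_sub always; exists nstar.
Qed.

Lemma generator_upper_density (R : realType) {L} {K Khat : set nat} {x} :
  infinite_set K -> enum_finite_noise Khat x ->
  (mu_low R Khat K <= limn_esup (fun n => mu_low R (generator L (prefix x n)) K))%E.
Proof.
move=> infK [_ [Khx _]]; apply: limn_esup_ge_cofinal => N0.
have [n N0n record] := nat_seq_record_low (fun n => horizon L (prefix x n)) N0.
exists n => //; apply: mu_low_le_finite_diff => //.
apply: sub_finite_set (generator_cofinite_at_record record) => y [/Khx].
by split.
Qed.

Theorem theorem6p1 (R : realType) (c : R) (hc0 : 0 <= c) (hc1 : c <= 1)
    (C : set (set nat)) (hC : collection C) :
  (exists G : set_generator, valid_generator G /\
     generates_in_limit C (enum_noise_c_omissions c) G /\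
     achieves_upper_density C (enum_noise_c_omissions c) G (1 - c))
  /\
  (exists G : set_generator, valid_generator G /\
     generates_in_limit C enum_noise_finite_omissions G /\
     achieves_upper_density C enum_noise_finite_omissions G (1 : R)).
Proof.
have [L CL] := countable_sub_range hC.1; have infC := hC.2.
have generates K x Khat : C K -> Khat `<=` K -> enum_finite_noise Khat x ->
    exists nstar, forall n, (nstar <= n)%N -> generator L (prefix x n) `<=` K.
  by move=> /CL [i _ <-]; exact: generator_eventually_sub_language.
split; exists (generator L); split; try exact: generator_valid.
- split=> K x CK [Khat [KhK [mu_Khat en]]]; first exact: generates KhK en.
  exact: le_trans mu_Khat (generator_upper_density R (infC K CK) en).
- split=> K x CK [Khat [KhK [finite_omissions en]]]; first exact: generates KhK en.
  apply: le_trans (generator_upper_density R (infC K CK) en).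
  rewrite -(mu_low_id R K (infC K CK)).
  exact: mu_low_le_finite_diff (infC K CK) finite_omissions.
Qed.
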